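(* Let $s$ and $t$ be fixed positive integers. Then for sufficiently large $n$, $$R(\mathcal{SD}_{s,t},Q_n)\le n+\frac{(2+o(1))\,n}{\log n},$$ where $o(1)$ denotes a quantity tending to $0$ as $n\to\infty$ (for fixed $s,t$).
   Context: A poset $P_2$ is an (induced) subposet of $P_1$ if $P_2\subseteq P_1$ and for all $X,Y\in P_2$, $X\le_{P_2}Y$ iff $X\le_{P_1}Y$; a copy of a poset $P$ in $P_1$ is an induced subposet isomorphic to $P$. The Boolean lattice $Q_n$ is the poset of all subsets of an $n$-element set ordered by inclusion. A blue/red coloring of a poset is a map from its elements to $\{\text{blue},\text{red}\}$. For posets $P_1,P_2$, the poset Ramsey number $R(P_1,P_2)$ is the smallest integer $N$ such that every blue/red coloring of $Q_N$ contains a copy of $P_1$ all of whose elements are blue or a copy of $P_2$ all of whose elements are red. A chain $C_t$ is a totally ordered poset on $t$ elements. The $(s,t)$-subdivided diamond $\mathcal{SD}_{s,t}$ is the poset obtained from two disjoint chains of lengths $s$ and $t$, whose elements are pairwise incomparable across the two chains, by adding one element smaller than all others and one element larger than all others. $\log$ is base $2$. *)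

From mathcomp Require Import all_boot.
From Stdlib Require Export Reals.

Set Implicit Arguments.
Unset Strict Implicit.
Unset Printing Implicit Defensive.

Definition Q (N : nat) : finType := {set 'I_N}.
Definition Q_le (N : nat) : rel (Q N) := fun X Y => X \subset Y.

(* A copy of a finite poset (T, le) in Q_N: an induced subposet of Q_N
   isomorphic to (T, le), i.e. an injective order embedding
   (x <= y in T iff f x is a subset of f y). *)
Definition is_copy (T : finType) (le : rel T) (N : nat) (f : T -> {set 'I_N}) : Prop :=
  injective f /\ (forall x y : T, le x y = (f x \subset f y)).

Definition has_mono_copy (T : finType) (le : rel T) (N : nat)
    (col : {set 'I_N} -> bool) : Prop :=
  exists f : T -> {set 'I_N}, is_copy le f /\ (forall x : T, col (f x)).

(* Ramsey property at N: every blue/red colouring (true = blue, false = red)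
   of Q_N has a blue copy of P1 or a red copy of P2.
   The poset Ramsey number R(P1,P2) is the least N with this property. *)
Definition ramsey_prop (T1 : finType) (le1 : rel T1) (T2 : finType) (le2 : rel T2)
    (N : nat) : Prop :=
  forall c : {set 'I_N} -> bool,
    has_mono_copy le1 c \/ has_mono_copy le2 (fun X => ~~ c X).

(* The (s,t)-subdivided diamond: inl false = bottom, inl true = top,
   inr (inl i) = i-th element of the chain of s elements,
   inr (inr j) = j-th element of the chain of t elements. *)
Definition SD (s t : nat) : finType := (bool + ('I_s + 'I_t))%type.
Definition SD_le (s t : nat) : rel (SD s t) := fun x y =>
  match x, y with
  | inl false, _ => true
  | _, inl true => true
  | inl true, _ => false
  | _, inl false => false
  | inr (inl i), inr (inl j) => (nat_of_ord i <= nat_of_ord j)%N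
  | inr (inr i), inr (inr j) => (nat_of_ord i <= nat_of_ord j)%N
  | _, _ => false
  end.

Definition log2 (x : R) : R := (ln x / ln 2)%R.

(* Let d = max(s, t) and split the ground set of Q_(n + m d) into n "old"
   coordinates and m d "new" ones, indexed by cells (a, r) with a < m, r < d.
   A family S of d permutations of 'I_m orders the cells linearly and hence
   gives a maximal chain W_S of new sets.
   - Chain lemma: for every chain W of new sets, a colouring without red Q_n
     lifts W to a blue chain B_0 ∪ W_0 ⊆ ... ⊆ B_(m d) ∪ W_(m d), B_j old.
   - Two distinct families have chains that cross on d consecutive levels.
   - If 4^n < (m!)^d, two of the (m!)^d families give lifted chains with the
     same bottom and top (pigeonhole), and together they contain a blue
     SD_{s,t} (ramsey_of_factorial_bound).
   - Arithmetic: with L = floor(log2 n), m = (2K + 1) n / (K d (L + 1)) and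
     the estimate m! >= q^(m - q) for a suitable power q of 2, 4^n < (m!)^d
     holds for large n, while n + m d <= n + (2 + 1/K) n / log2 n.
   Taking 1/K < eps yields the theorem. *)

From Stdlib Require Import Reals Lra ClassicalEpsilon Classical.
From mathcomp Require Import all_boot fingroup perm zify.

Set Implicit Arguments.
Unset Strict Implicit.
Unset Printing Implicit Defensive.

Section OldAndNew.
Variables n k : nat.

Definition old (B : {set 'I_n}) : {set 'I_(n + k)} := [set lshift k i | i in B].

Definition new_part : {set 'I_(n + k)} := [set rshift n j | j in 'I_k].

Lemma oldS (B B' : {set 'I_n}) : B \subset B' -> old B \subset old B'.
Proof. exact: imsetS. Qed.

Lemma old_new_subset (B B' : {set 'I_n}) (W W' : {set 'I_(n + k)}) :
  W \subset new_part -> W' \subset new_part ->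
  (old B :|: W \subset old B' :|: W') = (B \subset B') && (W \subset W').
Proof.
move=> hW hW'; apply/idP/andP => [/subsetP hs|[BB' WW']]; last first.
  by apply: setUSS => //; exact: oldS.
split; apply/subsetP => x hx.
- have /hs : lshift k x \in old B :|: W by rewrite inE imset_f.
  rewrite inE => /orP [|hy]; first by rewrite mem_imset //; exact: lshift_inj.
  by move/subsetP: hW' => /(_ _ hy) /imsetP [j _ /eqP]; rewrite eq_lrshift.
- have /hs : x \in old B :|: W by rewrite inE hx orbT.
  rewrite inE => /orP [/imsetP [i _ ei]|//].
  by move/subsetP: hW => /(_ _ hx) /imsetP [j _ /eqP]; rewrite ei eq_lrshift.
Qed.

End OldAndNew.

Arguments old {n k} B.
Arguments new_part {n k}.

Definition holds (P : Prop) : bool := if excluded_middle_informative P then true else false.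

Lemma holdsP (P : Prop) : reflect P (holds P).
Proof. by rewrite /holds; case: excluded_middle_informative => h; constructor. Qed.

Section ChainLemma.
Variables (n k : nat) (c : {set 'I_(n + k)} -> bool) (W : nat -> {set 'I_(n + k)}).
Hypothesis W_new : forall i, W i \subset new_part.
Hypothesis W_mono : forall i j, i <= j -> W i \subset W j.

Definition lifts_below (A : {set 'I_n}) (i : nat) : Prop :=
  exists B : nat -> {set 'I_n},
    (forall j j', j <= j' -> j' <= i -> B j \subset B j') /\
    (forall j, j <= i -> B j \subset A /\ c (old (B j) :|: W j)).

Lemma lifts_below_mono (A A' : {set 'I_n}) i :
  A \subset A' -> lifts_below A i -> lifts_below A' i.
Proof.
move=> AA' [B [B_mono B_blue]]; exists B; split=> // j hj.
by have [BA ?] := B_blue j hj; split=> //; exact: subset_trans AA'.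
Qed.

Lemma lifts_below0 (A : {set 'I_n}) : c (old A :|: W 0) -> lifts_below A 0.
Proof. by move=> hc; exists (fun=> A); split=> // j; rewrite leqn0 => /eqP ->. Qed.

Lemma lifts_belowS (A : {set 'I_n}) i :
  lifts_below A i -> c (old A :|: W i.+1) -> lifts_below A i.+1.
Proof.
move=> [B [B_mono B_blue]] hc; exists (fun j => if j <= i then B j else A); split.
  move=> j j' jj' _; case: ifP => ji; case: ifP => j'i.
  - exact: B_mono.
  - exact: (B_blue j ji).1.
  - by move: ji; rewrite (leq_trans jj' j'i).
  - exact: subxx.
move=> j ji; case: ifP => [/B_blue //|/negbT]; rewrite -ltnNge => ij.
by have -> : j = i.+1 by apply/eqP; rewrite eqn_leq ji ij.
Qed.

Lemma red_copy_of_levels (h : {set 'I_n} -> nat) :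
  (forall A A' : {set 'I_n}, A \subset A' -> h A <= h A') ->
  (forall A, c (old A :|: W (h A)) = false) ->
  has_mono_copy (@Q_le n) (fun X => ~~ c X).
Proof.
move=> h_mono h_red; exists (fun A => old A :|: W (h A)).
have embed A A' : Q_le A A' = (old A :|: W (h A) \subset old A' :|: W (h A')).
  rewrite old_new_subset //; apply/idP/andP => [AA'|[] //].
  by split=> //; apply: W_mono; exact: h_mono.
split; last by move=> A; rewrite h_red.
split=> // A A' e; apply/eqP; rewrite eqEsubset -!/(Q_le _ _) !embed e subxx //.
Qed.

Lemma chain_lemma (top : nat) :
  has_mono_copy (@Q_le n) (fun X => ~~ c X) \/
  exists B : nat -> {set 'I_n},
    (forall j j', j <= j' -> j' <= top -> B j \subset B j') /\
    (forall j, j <= top -> c (old (B j) :|: W j)).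
Proof.
case: (classic (exists A, lifts_below A top)) => [[A [B [B_mono B_blue]]]|no_lift].
  by right; exists B; split=> // j /B_blue [].
left.
have fails A : exists i, ~~ holds (lifts_below A i).
  by exists top; apply/holdsP => hA; apply: no_lift; exists A.
(* h A is the first level at which no blue lift below A exists. *)
pose h A := ex_minn (fails A).
have h_fails A : ~ lifts_below A (h A).
  by rewrite /h; case: ex_minnP => i /holdsP.
have h_min A i : ~ lifts_below A i -> h A <= i.
  by move=> hi; rewrite /h; case: ex_minnP => j _; apply; apply/holdsP.
apply: (@red_copy_of_levels h).
  move=> A A' AA'; apply: h_min => hA'; apply: (h_fails A').
  exact: lifts_below_mono hA'.
move=> A; apply/negP => hc; apply: (h_fails A).
case E: (h A) hc => [|i] hc; first exact: lifts_below0.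
apply: lifts_belowS hc; apply: NNPP => hi.
by have := h_min _ _ hi; rewrite E ltnn.
Qed.

End ChainLemma.

Section PermutationChains.
Variables (n m d : nat).
Hypothesis d_gt0 : 0 < d.

Definition cell := ('I_m * 'I_d)%type.

Lemma cell_index_lt (y : cell) : y.1 * d + y.2 < m * d.
Proof.
case: y => [[a ha] [r hr]] /=; apply: (@leq_trans (a * d + d)).
  by rewrite ltn_add2l.
by rewrite -mulSnr leq_mul2r ha orbT.
Qed.

Definition cell_coord (y : cell) : 'I_(n + m * d) :=
  rshift n (Ordinal (cell_index_lt y)).

Lemma cell_coord_inj : injective cell_coord.
Proof.
move=> [[a ha] [r hr]] [[a' ha'] [r' hr']] /= /rshift_inj /(congr1 val) /= E.
have Ea : a = a'.
  by have := congr1 (divn^~ d) E; rewrite /= !divnMDl // !divn_small // !addn0.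
have Er : r = r'.
  by have := congr1 (modn^~ d) E; rewrite /= !modnMDl !modn_small.
by subst; congr pair; apply: val_inj.
Qed.

Definition family := {ffun 'I_d -> {perm 'I_m}}.

Definition rank (S : family) (y : cell) : nat := ((S y.2)^-1)%g y.1 * d + y.2.

Lemma rank_lt S y : rank S y < m * d.
Proof. exact: (cell_index_lt (((S y.2)^-1)%g y.1, y.2)). Qed.

Definition perm_chain (S : family) (i : nat) : {set 'I_(n + m * d)} :=
  cell_coord @: [set y | rank S y < i].

Lemma perm_chain_new S i : perm_chain S i \subset new_part.
Proof. by apply/subsetP => x /imsetP [y _ ->]; exact: imset_f. Qed.

Lemma perm_chain_mono S i j : i <= j -> perm_chain S i \subset perm_chain S j.
Proof.
move=> ij; apply: imsetS; apply/subsetP => y; rewrite !inE => h.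
exact: leq_trans h ij.
Qed.

Lemma mem_perm_chain S i y : (cell_coord y \in perm_chain S i) = (rank S y < i).
Proof. by rewrite mem_imset ?inE //; exact: cell_coord_inj. Qed.

Lemma perm_chain0 S : perm_chain S 0 = set0.
Proof. by apply/setP => x; rewrite inE; apply/imsetP => -[y]; rewrite inE ltn0. Qed.

Lemma perm_chain_top S : perm_chain S (m * d) = cell_coord @: setT.
Proof.
rewrite /perm_chain (_ : [set y | rank S y < m * d] = setT) //.
by apply/setP => y; rewrite !inE rank_lt.
Qed.

Lemma perm_chain_subsetE S i j :
  i <= m * d -> (perm_chain S i \subset perm_chain S j) = (i <= j).
Proof.
move=> im; apply/idP/idP => [/subsetP sub|]; last exact: perm_chain_mono.
rewrite leqNgt; apply/negP => ji.
have jm : j < m * d := leq_trans ji im.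
have a_lt : j %/ d < m by rewrite ltn_divLR.
have r_lt : j %% d < d by rewrite ltn_mod.
pose r := Ordinal r_lt; pose y : cell := (S r (Ordinal a_lt), r).
have ry : rank S y = j by rewrite /rank /= permK /= -divn_eq.
by have := sub (cell_coord y); rewrite !mem_perm_chain ry ltnn; move/(_ ji).
Qed.

Lemma perm_first_diff (pi pi' : {perm 'I_m}) q :
  pi q != pi' q -> (forall q', pi q' != pi' q' -> q <= q') ->
  q < (pi'^-1)%g (pi q).
Proof.
move=> hq q_min; set x := (pi'^-1)%g (pi q).
have pi'x : pi' x = pi q by rewrite /x permKV.
have qx : q != x by apply: contra hq => /eqP {2}->; rewrite pi'x.
rewrite ltn_neqAle qx q_min // pi'x.
by apply: contra qx => /eqP /perm_inj ->.
Qed.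

Lemma perm_chains_cross S S' : S != S' -> exists p, p + d < m * d /\
  forall a b, p < a <= p + d -> p < b <= p + d ->
    ~~ (perm_chain S a \subset perm_chain S' b) &&
    ~~ (perm_chain S' b \subset perm_chain S a).
Proof.
move=> SS'.
have [r hr] : exists r, S r != S' r.
  apply: NNPP => all_eq; case/eqP: SS'; apply/ffunP => r.
  by apply: NNPP => ne; apply: all_eq; exists r; apply/eqP.
have [a0 ha0] : exists a, S r a != S' r a.
  apply: NNPP => all_eq; case/eqP: hr; apply/permP => a.
  by apply: NNPP => ne; apply: all_eq; exists a; apply/eqP.
set pi := S r in hr ha0 *; set pi' := S' r in hr ha0 *.
case: (@arg_minnP _ a0 (fun q => pi q != pi' q) val ha0) => q hq q_min.
have after' := @perm_first_diff pi pi' q hq q_min.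
have after : q < (pi^-1)%g (pi' q).
  by apply: perm_first_diff; rewrite 1?eq_sym // => q' hq'; apply: q_min; rewrite eq_sym.
pose y : cell := (pi q, r); pose y' : cell := (pi' q, r).
have ry : rank S y = q * d + r by rewrite /rank /= permK.
have ry' : rank S' y' = q * d + r by rewrite /rank /= permK.
have late (x : 'I_m) : q < x -> q * d + r + d <= x * d + r.
  by move=> qx; rewrite addnAC leq_add2r -mulSnr leq_mul2r qx orbT.
have r'y : q * d + r + d <= rank S' y by exact: late.
have ry'_late : q * d + r + d <= rank S y' by exact: late.
exists (q * d + r); split; first exact: leq_ltn_trans r'y (rank_lt S' y).
move=> a b /andP [pa ap] /andP [pb bp]; apply/andP; split; apply/subsetP.
  move/(_ (cell_coord y)); rewrite !mem_perm_chain ry => /(_ pa) yb.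
  by have := leq_ltn_trans r'y (leq_trans yb bp); rewrite ltnn.
move/(_ (cell_coord y')); rewrite !mem_perm_chain ry' => /(_ pb) y'a.
by have := leq_ltn_trans ry'_late (leq_trans y'a ap); rewrite ltnn.
Qed.

End PermutationChains.

Lemma SD_le_anti (s t : nat) : antisymmetric (@SD_le s t).
Proof.
move=> [[]|[i|i]] [[]|[j|j]] //= /andP [ij ji].
- by congr (inr (inl _)); apply: val_inj; apply/eqP; rewrite eqn_leq ij ji.
- by congr (inr (inr _)); apply: val_inj; apply/eqP; rewrite eqn_leq ij ji.
Qed.

Lemma copy_of_embedding (T : finType) (le : rel T) (N : nat) (f : T -> {set 'I_N}) :
  antisymmetric le -> (forall x y, le x y = (f x \subset f y)) -> is_copy le f.
Proof.
move=> le_anti f_le; split=> // x y fxy; apply: le_anti.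
by rewrite !f_le fxy subxx.
Qed.

Section CrossingChains.
Variables (s t N d top p : nat) (c : {set 'I_N} -> bool) (Z Z' : nat -> {set 'I_N}).
Hypotheses (s_le_d : s <= d) (t_le_d : t <= d) (p_lt : p + d < top).
Hypothesis Z_chain : forall i j, i <= top -> j <= top -> (Z i \subset Z j) = (i <= j).
Hypothesis Z'_chain : forall i j, i <= top -> j <= top -> (Z' i \subset Z' j) = (i <= j).
Hypothesis Z_bot : Z 0 = Z' 0.
Hypothesis Z_top : Z top = Z' top.
Hypothesis Z_cross : forall a b, p < a <= p + d -> p < b <= p + d ->
  ~~ (Z a \subset Z' b) && ~~ (Z' b \subset Z a).
Hypothesis Z_blue : forall i, i <= top -> c (Z i) && c (Z' i).

(* Two strict chains with common ends that cross on the levels (p, p + d]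
   contain SD_{s,t}: its two chains sit on Z and Z' just above level p. *)
Definition diamond_map (x : SD s t) : {set 'I_N} :=
  match x with
  | inl false => Z 0
  | inl true => Z top
  | inr (inl i) => Z (p.+1 + i)
  | inr (inr j) => Z' (p.+1 + j)
  end.

Lemma level_cross (i : nat) : i < d -> p < p.+1 + i <= p + d.
Proof. by move=> id; rewrite addSn ltnS leq_addr /= -addnS leq_add2l. Qed.

Lemma level_lt_top (i : nat) : i < d -> p.+1 + i < top.
Proof. by move=> /level_cross /andP [_ lvl]; exact: leq_ltn_trans p_lt. Qed.

Lemma diamond_map_le x y : SD_le x y = (diamond_map x \subset diamond_map y).
Proof.
have s_d (i : 'I_s) : i < d := leq_trans (ltn_ord i) s_le_d.
have t_d (j : 'I_t) : j < d := leq_trans (ltn_ord j) t_le_d.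
have s_top (i : 'I_s) := ltnW (level_lt_top (s_d i)).
have t_top (j : 'I_t) := ltnW (level_lt_top (t_d j)).
have top_gt0 : 0 < top by exact: leq_ltn_trans p_lt.
case: x y => [[]|[i|i]] [[]|[j|j]]; rewrite /SD_le /diamond_map /=.
- by rewrite subxx.
- by rewrite Z_chain // leqNgt top_gt0.
- by rewrite Z_chain ?s_top // leqNgt level_lt_top.
- by rewrite Z_top Z'_chain ?t_top // leqNgt level_lt_top.
- by rewrite Z_chain.
- by rewrite subxx.
- by rewrite Z_chain ?s_top.
- by rewrite Z_bot Z'_chain ?t_top.
- by rewrite Z_chain ?s_top.
- by rewrite Z_chain ?s_top // addSn.
- by rewrite Z_chain ?s_top // leq_add2l.
- by have /andP [/negbTE -> _] := Z_cross (level_cross (s_d i)) (level_cross (t_d j)).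
- by rewrite Z_top Z'_chain ?t_top.
- by rewrite Z_bot Z'_chain ?t_top // addSn.
- by have /andP [_ /negbTE ->] := Z_cross (level_cross (s_d j)) (level_cross (t_d i)).
- by rewrite Z'_chain ?t_top // leq_add2l.
Qed.

Lemma diamond_copy : has_mono_copy (@SD_le s t) c.
Proof.
exists diamond_map; split; first exact: copy_of_embedding (@SD_le_anti s t) diamond_map_le.
move=> [[]|[i|i]] /=.
- by have /andP [-> _] := Z_blue (leqnn top).
- by have /andP [-> _] := Z_blue (leq0n top).
- by have /andP [-> _] := Z_blue (ltnW (level_lt_top (leq_trans (ltn_ord i) s_le_d))).
- by have /andP [_ ->] := Z_blue (ltnW (level_lt_top (leq_trans (ltn_ord i) t_le_d))).
Qed.

End CrossingChains.

Lemma card_Q (n : nat) : #|{: {set 'I_n}}| = 2 ^ n.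
Proof. by rewrite -cardsT -powersetT card_powerset cardsT card_ord. Qed.

(* Each of the (m!)^d
   families of permutations gives a blue lifted chain; two of them share
   their bottom and top, and their chains cross, forming a diamond. *)
Theorem ramsey_of_factorial_bound (s t n m d : nat) :
  0 < d -> s <= d -> t <= d -> 4 ^ n < (m`!) ^ d ->
  ramsey_prop (@SD_le s t) (@Q_le n) (n + m * d).
Proof.
move=> d_gt0 s_le_d t_le_d big c.
case: (classic (has_mono_copy (@Q_le n) (fun X => ~~ c X))) => [red|no_red].
  by right.
left.
have lift (S : family m d) : exists B : nat -> {set 'I_n},
    (forall j j', j <= j' -> j' <= m * d -> B j \subset B j') /\
    (forall j, j <= m * d -> c (old (B j) :|: perm_chain n S j)).
  by case: (chain_lemma c (perm_chain_new n S) (perm_chain_mono n S) (m * d)).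
pose B S := proj1_sig (constructive_indefinite_description _ (lift S)).
have B_spec S := proj2_sig (constructive_indefinite_description _ (lift S)).
pose ends S := (B S 0, B S (m * d)).
have [S [S' [SS' same_ends]]] : exists S S' : family m d, S != S' /\ ends S = ends S'.
  have : ~~ injectiveb ends.
    apply/negP => /injectiveP /leq_card.
    rewrite card_ffun card_Sn !card_ord card_prod !card_Q -expnMn.
    by rewrite leqNgt big.
  by case/injectivePn => S [S' SS' eq_ends]; exists S, S'.
have [p [p_lt cross]] := perm_chains_cross n d_gt0 SS'.
pose Z T i := old (B T i) :|: perm_chain n T i.
have Z_chain T i j : i <= m * d -> j <= m * d -> (Z T i \subset Z T j) = (i <= j).
  move=> im jm; rewrite old_new_subset ?perm_chain_new // perm_chain_subsetE //.
  by case: leqP => ij; rewrite ?andbF // andbT (B_spec T).1.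
apply: (@diamond_copy s t _ d (m * d) p c (Z S) (Z S') _ _ _ (Z_chain S) (Z_chain S')) => //.
- by rewrite /Z !perm_chain0; case: same_ends => -> _.
- by rewrite /Z !perm_chain_top; case: same_ends => _ ->.
- move=> a b pa pb; have /andP [ab ba] := cross a b pa pb.
  by rewrite !old_new_subset ?perm_chain_new // (negbTE ab) (negbTE ba) !andbF.
- by move=> i im; rewrite !(B_spec _).2.
Qed.

(* m! >= q^(m - q): each of the factors q+1, ..., m is at least q. *)
Lemma expn_sub_leq_fact (q m : nat) : q ^ (m - q) <= m`!.
Proof.
elim: m => [|m IH]; first by rewrite sub0n expn0.
case: (leqP q m) => qm.
  by rewrite subSn // expnS factS; apply: leq_mul => //; exact: leq_trans qm _.
by rewrite (_ : m.+1 - q = 0) ?expn0 ?fact_gt0 //; apply/eqP; rewrite subn_eq0.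
Qed.

Lemma cube_le_exp (j : nat) : (j + 13) ^ 3 <= 2 ^ (j + 12).
Proof.
elim: j => [//|j IH]; rewrite !addSn [2 ^ _]expnS.
apply: leq_trans (leq_mul (leqnn 2) IH); rewrite !expnS expn0; nia.
Qed.

Lemma poly_le_exp (c : nat) : exists h0, forall h, h0 <= h -> c * (h + 1) ^ 2 <= 2 ^ h.
Proof.
exists (maxn 12 c).+1 => h hh.
have := cube_le_exp (h - 12); rewrite subnK; last by lia.
rewrite (_ : h - 12 + 13 = h + 1); last by lia.
by apply: leq_trans; rewrite [(h + 1) ^ 3]expnS leq_mul2r; apply/orP; right; lia.
Qed.

(* 2n + 1 <= g (m - 2^g) d forces 4^n < (m!)^d, since m! >= (2^g)^(m - 2^g). *)
Lemma four_pow_lt_fact (n g m d : nat) :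
  2 * n + 1 <= g * (m - 2 ^ g) * d -> 4 ^ n < m`! ^ d.
Proof.
case: d => [|d] est; first by rewrite muln0 addn1 ltn0 in est.
apply: (@leq_trans (2 ^ (2 * n + 1))).
  by rewrite expnD expnM ltn_Pmulr // expn_gt0.
apply: (@leq_trans (2 ^ (g * (m - 2 ^ g) * d.+1))); first by rewrite leq_exp2l.
by rewrite -mulnA !expnM leq_exp2r ?expn_sub_leq_fact.
Qed.

Section FactorialBound.
Variables (K d : nat).
Hypotheses (K_gt0 : 0 < K) (d_gt0 : 0 < d).

(* Write M = 4K + 2; the estimate splits log2 n ~ L = g + h with h ~ L / M. *)
Let M := 4 * K + 2.

(* For L large, the split L = g + h with h = L / M makes 2^h dominate the
   polynomial K (L + 1)(1 + 2 L d), while g still exceeds 2K(h + 1). *)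
Lemma log_split (h0 L : nat) :
  (forall h, h0 <= h -> K * M * (1 + 2 * M * d) * (h + 1) ^ 2 <= 2 ^ h) ->
  M * (h0 + 1) <= L ->
  exists g h, [/\ L = g + h, K * (L + 1) * (1 + 2 * L * d) <= 2 ^ h
                & 2 * K * (h + 1) + 1 <= g].
Proof.
move=> poly L_big; have M_gt0 : 0 < M by rewrite /M addn2.
set h := L %/ M.
have h_big : h0 + 1 <= h by rewrite leq_divRL // mulnC.
have hM_le : h * M <= L := leq_divM L M.
have L_lt : L < M * (h + 1) by rewrite mulnC addn1; exact: ltn_ceil.
exists (L - h), h; split.
- by rewrite subnK //; apply: leq_trans hM_le; rewrite leq_pmulr.
- apply: leq_trans (poly h (leq_trans (leq_addr _ _) h_big)).
  have L1_le : L + 1 <= M * (h + 1) by rewrite addn1.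
  have dL_le : 1 + 2 * L * d <= (1 + 2 * M * d) * (h + 1).
    apply: (@leq_trans (1 + 2 * (M * (h + 1)) * d)).
      by rewrite leq_add2l leq_mul2r leq_mul2l ltnW ?orbT.
    rewrite (_ : (1 + 2 * M * d) * (h + 1) = (h + 1) + 2 * (M * (h + 1)) * d); last by lia.
    by rewrite leq_add2r addn1.
  rewrite (_ : K * M * (1 + 2 * M * d) * (h + 1) ^ 2
             = K * (M * (h + 1)) * ((1 + 2 * M * d) * (h + 1))); last by lia.
  exact: leq_mul (leq_mul (leqnn K) L1_le) dL_le.
- have h_gt0 : 1 <= h by exact: leq_trans (leq_addl _ _) h_big.
  have : K * 1 <= K * h by rewrite leq_mul2l h_gt0 orbT.
  by move: hM_le; rewrite /M; lia.
Qed.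

Lemma lower_terms_le (n L g h : nat) : L = g + h ->
  K * (L + 1) * (1 + 2 * L * d) <= 2 ^ h -> 2 ^ L <= n ->
  K * (L + 1) + g * (K * d * (L + 1)) * (1 + 2 ^ g) <= n.
Proof.
move=> Lgh poly_le L_le; apply: leq_trans L_le.
rewrite (_ : 2 ^ L = 2 ^ g * 2 ^ h); last by rewrite Lgh expnD.
set q := 2 ^ g; have q_gt0 : 0 < q by rewrite expn_gt0.
apply: (@leq_trans (q * (K * (L + 1) * (1 + 2 * L * d)))); last first.
  by rewrite leq_mul2l poly_le orbT.
rewrite (_ : q * (K * (L + 1) * (1 + 2 * L * d))
           = q * (K * (L + 1)) + L * (K * d * (L + 1)) * (2 * q)); last by lia.
apply: leq_add; first exact: leq_pmull.
apply: leq_mul; first by rewrite leq_mul2r Lgh leq_addr orbT.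
by rewrite mul2n -addnn leq_add2r.
Qed.

Lemma count_estimate (n L g h q m : nat) : L = g + h ->
  K * (L + 1) + g * (K * d * (L + 1)) * (1 + q) <= n ->
  2 * K * (h + 1) + 1 <= g -> (2 * K + 1) * n < m.+1 * (K * d * (L + 1)) ->
  2 * n + 1 <= g * (m - q) * d.
Proof.
move=> Lgh n_big g_big m_big; set P := K * d * (L + 1).
have KL_gt0 : 0 < K * (L + 1) by rewrite muln_gt0 K_gt0 addn1.
have m_low : (2 * K + 1) * n - P * (1 + q) <= P * m - P * q.
  by move: m_big; rewrite mulSn; lia.
rewrite -(leq_pmul2l KL_gt0).
rewrite (_ : K * (L + 1) * (g * (m - q) * d) = g * (P * m - P * q)); last first.
  by rewrite -mulnBr /P; lia.
apply: leq_trans (leq_mul (leqnn g) m_low).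
have gn := leq_mul g_big (leqnn n).
rewrite mulnBr (_ : K * (L + 1) * (2 * n + 1)
                  = 2 * K * (h + 1) * n + K * (L + 1) + 2 * K * g * n); last first.
  by rewrite Lgh; lia.
rewrite (_ : g * ((2 * K + 1) * n) = 2 * K * g * n + g * n); last by lia.
by move: gn n_big; rewrite mulnDl mul1n; lia.
Qed.

Lemma factorial_bound (h0 n : nat) :
  (forall h, h0 <= h -> K * M * (1 + 2 * M * d) * (h + 1) ^ 2 <= 2 ^ h) ->
  2 ^ (M * (h0 + 1)) <= n ->
  4 ^ n < (((2 * K + 1) * n) %/ (K * d * (trunc_log 2 n + 1)))`! ^ d.
Proof.
move=> poly n_big; set L := trunc_log 2 n.
have n_gt0 : 0 < n by apply: leq_trans n_big; rewrite expn_gt0.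
have [g [h [Lgh small g_big]]] := log_split poly (trunc_log_max (isT : 1 < 2) n_big).
have n_le := lower_terms_le Lgh small (trunc_logP (isT : 1 < 2) n_gt0).
apply: (four_pow_lt_fact (count_estimate Lgh n_le g_big _)).
by apply: ltn_ceil; rewrite !muln_gt0 K_gt0 d_gt0 addn1.
Qed.

End FactorialBound.


Section RealEstimate.
Local Open Scope R_scope.

Lemma INR_expn (a b : nat) : INR (a ^ b)%N = INR a ^ b.
Proof. by elim: b => [|b IH] //=; rewrite expnS mult_INR IH. Qed.

Lemma log2_bounds (n L : nat) : (1 <= L)%N -> (2 ^ L <= n)%N -> (n < 2 ^ (L + 1))%N ->
  0 < log2 (INR n) < INR L + 1.
Proof.
move=> L_ge1 low high.
have ln2_gt0 : 0 < ln 2 by have := ln_lt_2; lra.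
have n_ge2 : 2 <= INR n.
  have /leP : (2 <= n)%N by apply: leq_trans low; rewrite -{1}(expn1 2) leq_exp2l.
  by move/le_INR.
have n_lt : INR n < 2 ^ (L + 1).
  by rewrite -(INR_expn 2) /=; apply: lt_INR; apply/ltP.
have ln_n_gt0 : 0 < ln (INR n) by rewrite -ln_1; apply: ln_increasing; lra.
have ln_n_lt : ln (INR n) < INR (L + 1) * ln 2.
  by rewrite -ln_pow; [apply: ln_increasing; lra | lra].
split; first exact: Rdiv_lt_0_compat.
rewrite (_ : INR L + 1 = INR (L + 1)); last by rewrite plus_INR.
rewrite /log2 -(Rmult_div_l (INR (L + 1)) (ln 2)); last lra.
by apply: Rmult_lt_compat_r => //; apply: Rinv_0_lt_compat.
Qed.

Lemma host_size_bound (n L m d K : nat) (eps : R) : (0 < K)%N -> (1 <= L)%N ->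
  (2 ^ L <= n)%N -> (n < 2 ^ (L + 1))%N -> (K * d * (L + 1) * m <= (2 * K + 1) * n)%N ->
  / INR K < eps ->
  INR (n + m * d) <= INR n + (2 + eps) * INR n / log2 (INR n).
Proof.
move=> K_gt0 L_ge1 low high m_le eps_gt.
have [lg_gt0 lg_lt] := log2_bounds L_ge1 low high.
have KR_gt0 : 0 < INR K by apply: lt_0_INR; apply/ltP.
have epsK : 1 < eps * INR K.
  by rewrite -(Rinv_l (INR K)); [apply: Rmult_lt_compat_r | lra].
have m_leR := le_INR _ _ (leP m_le); rewrite !mult_INR !plus_INR /= in m_leR.
set x := INR m * INR d.
have x_ge0 : 0 <= x by apply: Rmult_le_pos; apply: pos_INR.
have L_ge0 := pos_INR L.
have n_ge0 := pos_INR n.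
have x_L : x * (INR L + 1) <= (2 + eps) * INR n.
  apply: (Rmult_le_reg_r (INR K)) => //.
  by rewrite /x; nra.
have x_lg : x * log2 (INR n) <= (2 + eps) * INR n.
  by apply: Rle_trans x_L; apply: Rmult_le_compat_l => //; lra.
rewrite plus_INR mult_INR -/x; apply: Rplus_le_compat_l.
rewrite -(Rmult_div_l x (log2 (INR n))); last lra.
by apply: Rmult_le_compat_r => //; apply: Rlt_le; apply: Rinv_0_lt_compat.
Qed.

End RealEstimate.

(* MathComp takes over the scope key %R; the statement below uses it for R. *)
Delimit Scope R_scope with R.

Theorem theorem3 (s t : nat) (hs : (0 < s)%N) (ht : (0 < t)%N) :
  forall eps : R, (0 < eps)%R ->
  exists n0 : nat, forall n : nat, (n0 <= n)%N ->
    exists N : nat,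
      (INR N <= INR n + (2 + eps) * INR n / log2 (INR n))%R /\
      ramsey_prop (@SD_le s t) (@Q_le n) N.
Proof.
move=> eps eps_gt0; pose d := maxn s t.
have d_gt0 : (0 < d)%N by apply: leq_trans hs (leq_maxl s t).
have [K [K_eps /ltP K_gt0]] := archimed_cor1 eps eps_gt0.
have [h0 poly] := poly_le_exp (K * (4 * K + 2) * (1 + 2 * (4 * K + 2) * d)).
exists (2 ^ ((4 * K + 2) * (h0 + 1)))%N => n n_big.
pose L := trunc_log 2 n; pose m := ((2 * K + 1) * n) %/ (K * d * (L + 1)).
have n_ge2 : (2 ^ 1 <= n)%N by apply: leq_trans n_big; rewrite leq_exp2l //; lia.
exists (n + m * d)%N; split.
- apply: (@host_size_bound n L m d K) => //.
  + exact: trunc_log_max n_ge2.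
  + exact: trunc_logP (leq_trans (isT : 0 < 2 ^ 1) n_ge2).
  + by rewrite addn1; exact: trunc_log_ltn.
  + by rewrite mulnC; exact: leq_divM.
- apply: ramsey_of_factorial_bound (leq_maxl s t) (leq_maxr s t) _ => //.
  exact: factorial_bound poly n_big.
Qed.
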